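(* Consider the extended networked closed-loop system (with state feedback) described in the context. Assume: $Q,R,T$ are positive definite; $(Q^{1/2},A)$ is observable; $\rho(A-BK)<1$ and $\rho(A-B\bar K)<1$; $P=(A-B\bar K)^\top P(A-B\bar K)+Q+\bar K^\top R\bar K$; and the network satisfies $\mathrm{Prob}\big(\bigcap_{t\ge k}\{\gamma_{t-1}\theta_t=0\}\big)=0$ for all $k\ge0$. Suppose there exists $k_0$ such that $\gamma_{k_0-1}=1$, $\theta_{k_0}=1$, $x(k_0)-x_n(k_0)\in\mathbb{Z}_K$, and the extended MPC optimization problem is feasible. If the consistent actuator with the nominal state update and the ancillary controller are used, then the extended MPC optimization problem is feasible and $x(k)\in\mathbb{X}$ and $u(k)\in\mathbb{U}$ for all $k\ge k_0$.
   Context: Plant: $x(k+1)=Ax(k)+Bu(k)+w(k)$ with $x(k)\in\mathbb{R}^{n_x}$, $u(k)\in\mathbb{R}^{n_u}$, $(A,B)$ stabilizable, and $w(k)\in\mathbb{W}=\{w: H_w w\le h_w\}$ for all $k$, where $\mathbb{W}$ is compact and contains the origin in its interior. State and input constraint sets $\mathbb{X}=\{x:H_x x\le h_x\}$, $\mathbb{U}=\{u:H_u u\le h_u\}$ are bounded and contain the origin in their interior. $\oplus$ is the Minkowski sum, $\ominus$ the Pontryagin difference, $M\mathbb{P}=\{Mp:p\in\mathbb{P}\}$. Network: binary variables $\theta_k$ ($=1$ iff the packet $U_k$ sent by the remote controller at time $k$ is received by the plant) and $\gamma_k$ ($=1$ iff the packet $X_k$ sent by the plant at time $k$ is received by the controller).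 Sets: $\mathbb{Z}_K=\bigoplus_{i=0}^\infty (A-BK)^i\mathbb{W}$; $\mathbb{X}_c=\mathbb{X}\ominus\mathbb{Z}_K$, $\mathbb{U}_c=\mathbb{U}\ominus(-K)\mathbb{Z}_K$. With $x_a=(x_n,\bar x,\bar u)$ and $A_a=\begin{bmatrix}A-B\bar K & B\bar K & B\\ 0& I&0\\0&0&I\end{bmatrix}$, $X_{f,\bar K}=\{x_a: A_a^k x_a\in\mathbb{X}_{a,\bar K}\ \forall k\ge0\}$ where $\mathbb{X}_{a,\bar K}=\{x_a: x_n\in\mathbb{X}_c,\ \bar u-\bar K(x_n-\bar x)\in\mathbb{U}_c\}$; for fixed $\lambda\in(0,1)$, $X^\lambda_{f,\bar K}=X_{f,\bar K}\cap\{(x_n,\bar x,\bar u):\bar x\in\lambda\mathbb{X}_c,\ \bar u\in\lambda\mathbb{U}_c\}$. Extended remote MPC at time $k$ (horizon $N$, reference $x_r$): minimize over $\mathbf{x}(0)$ (when free), $\mathbf{u}(0),\dots,\mathbf{u}(N-1),\bar x,\bar u$ the cost $\sum_{i=0}^{N-1}(\|\mathbf{x}(i)-\bar x\|_Q^2+\|\mathbf{u}(i)-\bar u\|_R^2)+\|\mathbf{x}(N)-\bar x\|_P^2+\|\bar x-x_r\|_T^2$ subject to $\mathbf{x}(i+1)=A\mathbf{x}(i)+B\mathbf{u}(i)$, $\mathbf{x}(i)\in\mathbb{X}_c$, $\mathbf{u}(i)\in\mathbb{U}_c$ for $i=0,\dots,N-1$, $(\mathbf{x}(N),\bar x,\bar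 u)\in X^\lambda_{f,\bar K}$, $(A-I)\bar x+B\bar u=0$, and the initial condition: if $\gamma_{k-1}=1$, then $\{\hat x(k|k-1)\}\oplus\mathbb{W}\subseteq\{\mathbf{x}(0)\}\oplus\mathbb{Z}_K$; otherwise $\mathbf{x}(0)=\hat x(k|k-1)$. With optimal solution $\mathbf{x}^*_k,\mathbf{u}^*_k,\bar x^*_k,\bar u^*_k$, the controller sends $U_k=\{\mathbf{u}^*_k,\ \bar u^*_k+\bar K\bar x^*_k,\ \mathbf{x}^*_k(0),\ q_k\}$. Local side: $\Theta_k=\prod_{i=q_k+1}^k\theta_i$ if $\theta_k=1$ and $\Theta_k=0$ otherwise; $s_k=\Theta_k k+(1-\Theta_k)s_{k-1}$. Nominal state update: if $\Theta_k=1$, the nominal state is reset to $x_n(k)=\mathbf{x}^*_k(0)$. Consistent actuator: $u_n(k)=\mathbf{u}^*_{s_k}(k-s_k)$ if $k-s_k<N$, else $u_n(k)=\bar u^*_{s_k}+\bar K\bar x^*_{s_k}-\bar K x_n(k)$. Nominal model $x_n(k+1)=Ax_n(k)+Bu_n(k)$. Ancillary controller $u(k)=u_n(k)-K(x(k)-x_n(k))$. The plant sends $X_k=\{x(k),x_n(k),s_k\}$. Remote estimator: $\hat x(k+1|k)=A\hat x(k|k)+B\hat u(k|k)$ with $\hat x(k|k)=\gamma_k x(k)+(1-\gamma_k)\mathbf{x}^*_k(0)$, $\hat u(k|k)=\gamma_k u(k)+(1-\gamma_k)\mathbf{u}^*_k(0)$ (where $u(k)$ is computed remotely from the ancillary controller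 law), and $q_{k+1}=\gamma_k k+(1-\gamma_k)q_k$. *)

From HB Require Import structures.
From mathcomp Require Import all_boot all_order all_algebra.
From mathcomp Require Import all_classical all_reals all_analysis.
From mathcomp Require complex.
Import complex.ComplexField.
Set Implicit Arguments. Unset Strict Implicit. Unset Printing Implicit Defensive.
Import Order.TTheory GRing.Theory Num.Theory.
Import numFieldNormedType.Exports.
Local Open Scope ring_scope.
Local Open Scope classical_set_scope.

Section Defs.
Variable R : realType.

Definition polyh (p n : nat) (H : 'M[R]_(p, n)) (h : 'cV[R]_p) : set 'cV[R]_n :=
  [set v | forall i, (H *m v) i 0 <= h i 0].

Definition compact_cv (n : nat) (S : set 'cV[R]_n) : Prop :=
  compact (S : set 'M[R]_(n, 1)).

Definition zero_interior (n : nat) (S : set 'cV[R]_n) : Prop :=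
  interior (S : set 'M[R]_(n, 1)) 0.

Definition msum (n : nat) (S1 S2 : set 'cV[R]_n) : set 'cV[R]_n :=
  [set v | exists a b, S1 a /\ S2 b /\ v = a + b].
Definition pdiff (n : nat) (S1 S2 : set 'cV[R]_n) : set 'cV[R]_n :=
  [set v | forall b, S2 b -> S1 (v + b)].
Definition limage (m n : nat) (M : 'M[R]_(m, n)) (S : set 'cV[R]_n) : set 'cV[R]_m :=
  [set M *m v | v in S].
Definition sscale (n : nat) (l : R) (S : set 'cV[R]_n) : set 'cV[R]_n :=
  [set l *: v | v in S].

(* infinite Minkowski sum  \bigoplus_{i>=0} M^i S : all sums of the
   (convergent) series sum_i M^i w_i with w_i in S *)
Definition inf_msum (n : nat) (M : 'M[R]_n) (S : set 'cV[R]_n) : set 'cV[R]_n :=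
  [set z : 'cV[R]_n | exists w : nat -> 'cV[R]_n, (forall i, S (w i)) /\
     forall r c, (fun N : nat => \sum_(i < N) (M ^+ i *m w i) r c) @ \oo --> (z r c : R)].

(* spectral radius < 1: every (complex) eigenvalue has modulus < 1 *)
Definition schur_stable (n : nat) (M : 'M[R]_n) : Prop :=
  forall z : complex.complex R,
    eigenvalue (map_mx (fun x : R => complex.Complex x 0) M) z ->
    `|z| < 1.

Definition stabilizable (n m : nat) (A : 'M[R]_n) (B : 'M[R]_(n, m)) : Prop :=
  exists K : 'M[R]_(m, n), schur_stable (A - B *m K).

Definition posdef (n : nat) (Q : 'M[R]_n) : Prop :=
  Q^T = Q /\ forall x : 'cV[R]_n, x != 0 -> 0 < (x^T *m Q *m x) 0 0.

Definition possemidef (n : nat) (Q : 'M[R]_n) : Prop :=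
  Q^T = Q /\ forall x : 'cV[R]_n, 0 <= (x^T *m Q *m x) 0 0.

Definition observable (p n : nat) (C : 'M[R]_(p, n)) (A : 'M[R]_n) : Prop :=
  \rank (\mxcol_(i < n) (C *m A ^+ i)) = n.

(* (Q^{1/2}, A) observable, Q^{1/2} the symmetric PSD square root of Q *)
Definition sqrt_observable (n : nat) (Q A : 'M[R]_n) : Prop :=
  exists S : 'M[R]_n, possemidef S /\ S *m S = Q /\ observable S A.

Definition qnorm (n : nat) (M : 'M[R]_n) (v : 'cV[R]_n) : R := (v^T *m M *m v) 0 0.

Section Terminal.
Variables (nx nu : nat) (A : 'M[R]_nx) (B : 'M[R]_(nx, nu)) (Kb : 'M[R]_(nu, nx)).
Variables (Xc : set 'cV[R]_nx) (Uc : set 'cV[R]_nu).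

(* action of A_a on x_a = (x_n, xbar, ubar) *)
Definition aug_step (xa : 'cV[R]_nx * 'cV[R]_nx * 'cV[R]_nu) :=
  let: (xn, xb, ub) := xa in
  ((A - B *m Kb) *m xn + B *m Kb *m xb + B *m ub, xb, ub).

Definition Xa_set : set ('cV[R]_nx * 'cV[R]_nx * 'cV[R]_nu) :=
  [set xa | let: (xn, xb, ub) := xa in Xc xn /\ Uc (ub - Kb *m (xn - xb))].

Definition Xf_set : set ('cV[R]_nx * 'cV[R]_nx * 'cV[R]_nu) :=
  [set xa | forall k, Xa_set (iter k aug_step xa)].

Definition Xf_lambda (lam : R) : set ('cV[R]_nx * 'cV[R]_nx * 'cV[R]_nu) :=
  [set xa | Xf_set xa /\ sscale lam Xc xa.1.2 /\ sscale lam Uc xa.2].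
End Terminal.

Section MPC.
Variables (nx nu : nat) (A : 'M[R]_nx) (B : 'M[R]_(nx, nu)) (Kb : 'M[R]_(nu, nx)).
Variables (W ZK Xc : set 'cV[R]_nx) (Uc : set 'cV[R]_nu).
Variables (Q P T : 'M[R]_nx) (Rw : 'M[R]_nu) (xr : 'cV[R]_nx) (N : nat) (lam : R).

Fixpoint pred_traj (x0 : 'cV[R]_nx) (u : nat -> 'cV[R]_nu) (i : nat) : 'cV[R]_nx :=
  match i with
  | 0 => x0
  | i'.+1 => A *m pred_traj x0 u i' + B *m u i'
  end.

(* feasibility of the decision variables (x(0), u(0..N-1), xbar, ubar),
   given gamma_{k-1} and xhat(k|k-1) *)
Definition mpc_admissible (gprev : bool) (xhat : 'cV[R]_nx)
  (x0 : 'cV[R]_nx) (u : nat -> 'cV[R]_nu) (xb : 'cV[R]_nx) (ub : 'cV[R]_nu) : Prop :=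
  (forall i, (i < N)%N -> Xc (pred_traj x0 u i) /\ Uc (u i)) /\
  Xf_lambda A B Kb Xc Uc lam (pred_traj x0 u N, xb, ub) /\
  (A - 1%:M) *m xb + B *m ub = 0 /\
  (if gprev then
     msum [set xhat] W `<=` msum [set x0] ZK
   else x0 = xhat).

Definition mpc_cost (x0 : 'cV[R]_nx) (u : nat -> 'cV[R]_nu) (xb : 'cV[R]_nx) (ub : 'cV[R]_nu) : R :=
  \sum_(i < N) (qnorm Q (pred_traj x0 u i - xb) + qnorm Rw (u i - ub))
  + qnorm P (pred_traj x0 u N - xb) + qnorm T (xb - xr).

Definition mpc_feasible (gprev : bool) (xhat : 'cV[R]_nx) : Prop :=
  exists x0 u xb ub, mpc_admissible gprev xhat x0 u xb ub.

Definition mpc_optimal (gprev : bool) (xhat : 'cV[R]_nx)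
  (x0 : 'cV[R]_nx) (u : nat -> 'cV[R]_nu) (xb : 'cV[R]_nx) (ub : 'cV[R]_nu) : Prop :=
  mpc_admissible gprev xhat x0 u xb ub /\
  forall x0' u' xb' ub', mpc_admissible gprev xhat x0' u' xb' ub' ->
    mpc_cost x0 u xb ub <= mpc_cost x0' u' xb' ub'.
End MPC.

End Defs.

(* Theta_k = prod_{i=q_k+1}^{k} theta_i  if theta_k = 1, and 0 otherwise *)
Definition Theta_of (th : nat -> bool) (q k : nat) : bool :=
  th k && all th (iota q.+1 (k - q)).

From Pilot Require Import Defs.
From HB Require Import structures.
From mathcomp Require Import all_boot all_order all_algebra.
From mathcomp Require Import all_classical all_reals all_analysis.
Set Implicit Arguments.
Unset Strict Implicit.
Unset Printing Implicit Defensive.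
Import Order.TTheory GRing.Theory Num.Theory.
Import numFieldNormedType.Exports.
Local Open Scope ring_scope.
Local Open Scope classical_set_scope.

(* Whenever the nominal state is propagated by the
   nominal model, the error e = x - x_n obeys e+ = (A - B K) e + w, so it stays in the
   robust invariant set Z_K.  The nominal state always follows the last plan accepted
   by the plant, continued beyond the horizon by the terminal law
   u = ubar + Kbar xbar - Kbar x_n; invariance of the terminal set under that law keeps
   the nominal trajectory in the tightened sets X_c, U_c forever, hence x = x_n + e is
   in X and u = u_n - K e is in U.  Feasibility propagates because the tail of the
   followed plan is a candidate solution at the next step: with a measurement
   (gamma = 1) the nominal successor satisfies the initial-set constraint, without one
   the estimate is the one-step prediction of the previous solution.  The argument is
   pathwise and uses only admissibility of the applied solutions. *)

Lemma leq_ind (m : nat) (P : nat -> Prop) :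
  P m -> (forall n, (m <= n)%N -> P n -> P n.+1) -> forall n, (m <= n)%N -> P n.
Proof.
move=> Pm PS n /subnKC <-; elim: (n - m)%N => [|d IH]; first by rewrite addn0.
by rewrite addnS; apply: PS IH; apply: leq_addr.
Qed.

Lemma Theta_of_last (th : nat -> bool) k : th k.+1 -> Theta_of th k k.+1.
Proof. by move=> thk; rewrite /Theta_of subSnn /= thk. Qed.

Lemma Theta_of_prev (th : nat -> bool) q k :
  (q < k)%N -> Theta_of th q k.+1 -> Theta_of th q k.
Proof.
move=> lt_qk /andP[_]; rewrite /Theta_of subSn 1?ltnW //.
rewrite -[(k - q).+1]addn1 iotaD all_cat.
case/andP=> th_qk _; rewrite th_qk andbT; apply: (allP th_qk).
by rewrite mem_iota lt_qk addSn subnKC ?ltnSn //; apply: ltnW.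
Qed.

Lemma inf_msum_mulmxD (R : realType) (n : nat) (M : 'M[R]_n) (S : set 'cV[R]_n) z b :
  inf_msum M S z -> S b -> inf_msum M S (M *m z + b).
Proof.
case=> w [Sw cvg_w] Sb.
pose w' i := if i is i'.+1 then w i' else b.
exists w'; split=> [[|j] //|r c]; first exact: Sw.
have sum_shift m : \sum_(i < m.+1) M ^+ i *m w' i = b + M *m \sum_(i < m) M ^+ i *m w i.
  rewrite big_ord_recl expr0 mul1mx mulmx_sumr; congr (_ + _).
  by apply: eq_bigr => i _; rewrite exprS mulmxA.
rewrite -(cvg_shiftS (fun m : nat => \sum_(i < m) _)) /=.
under eq_fun do rewrite -summxE sum_shift !mxE.
rewrite !mxE addrC; apply: cvgD; first exact: cvg_cst.
apply: (@cvg_big R 'I_n +%R 0 (fun=> true) add_continuous) => // j _.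
by apply: cvgMl_tmp; under eq_fun do rewrite summxE; exact: cvg_w.
Qed.

Lemma tube_constraints (R : realType) (nx nu : nat) (K : 'M[R]_(nu, nx))
    (X Z : set 'cV[R]_nx) (U : set 'cV[R]_nu) xn un e :
  pdiff X Z xn -> pdiff U (limage (- K) Z) un -> Z e -> X (xn + e) /\ U (un - K *m e).
Proof.
move=> Xxn Uun Ze; split; first exact: Xxn.
by rewrite -mulNmx; apply: Uun; exists e.
Qed.

Lemma ancillary_step_split (R : realType) (nx nu : nat) (A : 'M[R]_nx) (B : 'M[R]_(nx, nu))
    (K : 'M[R]_(nu, nx)) (x y : 'cV[R]_nx) (v : 'cV[R]_nu) :
  A *m x + B *m (v - K *m (x - y)) = A *m y + B *m v + (A - B *m K) *m (x - y).
Proof.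
rewrite -{1}(subrK y x) mulmxDr (mulmxBr B) mulmxBl -mulmxA.
by rewrite [_ *m (x - y) + _]addrC -!addrA; congr (_ + _); rewrite addrCA.
Qed.

Section ConsistentActuator.
Variables (R : realType) (nx nu : nat) (A : 'M[R]_nx) (B : 'M[R]_(nx, nu)).
Variables (Kb : 'M[R]_(nu, nx)) (W Z Xc : set 'cV[R]_nx) (Uc : set 'cV[R]_nu).
Variables (N : nat) (lam : R).

Definition plan_input (u : nat -> 'cV[R]_nu) (xb : 'cV[R]_nx) (ub : 'cV[R]_nu)
    (i : nat) (y : 'cV[R]_nx) : 'cV[R]_nu :=
  if (i < N)%N then u i else ub + Kb *m xb - Kb *m y.

Fixpoint plan_traj x0 u xb ub (i : nat) : 'cV[R]_nx :=
  if i is i'.+1 then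
    A *m plan_traj x0 u xb ub i' + B *m plan_input u xb ub i' (plan_traj x0 u xb ub i')
  else x0.

Definition init_consistent (g : bool) (xh x0 : 'cV[R]_nx) : Prop :=
  if g then Defs.msum [set xh] W `<=` Defs.msum [set x0] Z else x0 = xh.

Lemma plan_traj_pred x0 u xb ub i :
  (i <= N)%N -> plan_traj x0 u xb ub i = pred_traj A B x0 u i.
Proof.
by elim: i => [//|i IH] /= ltiN; rewrite IH 1?ltnW // /plan_input ltiN.
Qed.

Lemma aug_step_plan xb ub y :
  aug_step A B Kb (y, xb, ub) = (A *m y + B *m (ub + Kb *m xb - Kb *m y), xb, ub).
Proof.
congr (_, _, _); rewrite mulmxBl !mulmxDr mulmxN !mulmxA.
by rewrite -!addrA; congr (_ + _); rewrite addrC (addrC (B *m ub)) addrAC.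
Qed.

Lemma iter_aug_step_plan_traj x0 u xb ub j k : (N <= j)%N ->
  iter k (aug_step A B Kb) (plan_traj x0 u xb ub j, xb, ub)
  = (plan_traj x0 u xb ub (j + k), xb, ub).
Proof.
move=> leNj; elim: k => [|k IH]; first by rewrite addn0.
rewrite iterS IH aug_step_plan addnS /= /plan_input ltnNge.
by rewrite (leq_trans leNj (leq_addr _ _)).
Qed.

Lemma admissible_plan_traj g xh x0 u xb ub :
  mpc_admissible A B Kb W Z Xc Uc N lam g xh x0 u xb ub ->
  forall i, Xc (plan_traj x0 u xb ub i) /\
            Uc (plan_input u xb ub i (plan_traj x0 u xb ub i)).
Proof.
case=> pred_in [[term_in _] _] i; case: (ltnP i N) => [ltiN|leNi].
  by rewrite plan_traj_pred ?(ltnW ltiN) // /plan_input ltiN; apply: pred_in.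
have := term_in (i - N)%N.
rewrite -(plan_traj_pred x0 u xb ub) // iter_aug_step_plan_traj // subnKC //=.
by rewrite /plan_input ltnNge leNi mulmxBr opprB addrA (addrC ub).
Qed.

Definition shifted_input x0 u xb ub j (i : nat) : 'cV[R]_nu :=
  plan_input u xb ub (j + i) (plan_traj x0 u xb ub (j + i)).

Lemma pred_traj_shifted x0 u xb ub j i :
  pred_traj A B (plan_traj x0 u xb ub j) (shifted_input x0 u xb ub j) i
  = plan_traj x0 u xb ub (j + i).
Proof. by elim: i => [|i IH] /=; rewrite ?addn0 // IH addnS. Qed.

Lemma feasible_shifted_plan g xh x0 u xb ub j g' xh' :
  mpc_admissible A B Kb W Z Xc Uc N lam g xh x0 u xb ub ->
  init_consistent g' xh' (plan_traj x0 u xb ub j) ->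
  mpc_feasible A B Kb W Z Xc Uc N lam g' xh'.
Proof.
move=> adm init; have plan_in := admissible_plan_traj adm.
case: adm => _ [[term_in [xbXc ubUc]] [steady _]].
exists (plan_traj x0 u xb ub j), (shifted_input x0 u xb ub j), xb, ub.
split; first by move=> i _; rewrite pred_traj_shifted; apply: plan_in.
split=> //; split=> //; rewrite pred_traj_shifted => k.
have := term_in (j + k)%N; rewrite -(plan_traj_pred x0 u xb ub) //.
by rewrite !iter_aug_step_plan_traj ?leq_addl // addnA (addnC N).
Qed.

End ConsistentActuator.

Section ClosedLoop.
Variables (R : realType) (nx nu : nat) (A : 'M[R]_nx) (B : 'M[R]_(nx, nu)).
Variables (K Kb : 'M[R]_(nu, nx)) (W Z Xc : set 'cV[R]_nx) (Uc : set 'cV[R]_nu).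
Variables (N : nat) (lam : R) (gamma theta : nat -> bool).
Variables (x w xn xhat x0s xbs : nat -> 'cV[R]_nx) (u un ubs : nat -> 'cV[R]_nu).
Variables (s q : nat -> nat) (us : nat -> nat -> 'cV[R]_nu) (k0 : nat).

Hypothesis Z_invariant : forall z b, Z z -> W b -> Z ((A - B *m K) *m z + b).
Hypothesis N_gt0 : (0 < N)%N.
Hypothesis w_in_W : forall k, W (w k).
Hypothesis x_next : forall k, x k.+1 = A *m x k + B *m u k + w k.
Hypothesis u_ancillary : forall k, u k = un k - K *m (x k - xn k).
Hypothesis un_actuator : forall k,
  un k = if (k - s k < N)%N then us (s k) (k - s k)
         else ubs (s k) + Kb *m xbs (s k) - Kb *m xn k.
Hypothesis xn_next : forall k,
  xn k.+1 = if Theta_of theta (q k.+1) k.+1 then x0s k.+1 else A *m xn k + B *m un k.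
Hypothesis s_next : forall k,
  s k.+1 = if Theta_of theta (q k.+1) k.+1 then k.+1 else s k.
Hypothesis xhat_next : forall k,
  xhat k.+1 = A *m (if gamma k then x k else x0s k)
              + B *m (if gamma k then u k else us k 0%N).
Hypothesis q_next : forall k, q k.+1 = if gamma k then k else q k.
Hypothesis solution_admissible : forall k,
  mpc_feasible A B Kb W Z Xc Uc N lam (gamma k) (xhat k.+1) ->
  mpc_admissible A B Kb W Z Xc Uc N lam (gamma k) (xhat k.+1)
    (x0s k.+1) (us k.+1) (xbs k.+1) (ubs k.+1).
Hypotheses (k0_gt0 : (0 < k0)%N) (gamma_k0 : gamma k0.-1) (theta_k0 : theta k0).
Hypothesis error_k0 : Z (x k0 - xn k0).
Hypothesis feasible_k0 : mpc_feasible A B Kb W Z Xc Uc N lam (gamma k0.-1) (xhat k0).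

Definition feasible_at j := mpc_feasible A B Kb W Z Xc Uc N lam (gamma j.-1) (xhat j).

Definition admissible_at j := mpc_admissible A B Kb W Z Xc Uc N lam (gamma j.-1) (xhat j)
  (x0s j) (us j) (xbs j) (ubs j).

Definition plan_state j :=
  plan_traj A B Kb N (x0s (s j)) (us (s j)) (xbs (s j)) (ubs (s j)) (j - s j).

Definition tracking j :=
  [/\ admissible_at j, admissible_at (s j), xn j = plan_state j & Z (x j - xn j)].

Lemma feasible_admissible_at j : (0 < j)%N -> feasible_at j -> admissible_at j.
Proof. by case: j => // j _; apply: solution_admissible. Qed.

Lemma reset_state j : (0 < j)%N -> Theta_of theta (q j) j -> xn j = x0s j /\ s j = j.
Proof. by case: j => // j _ reset; rewrite xn_next s_next reset. Qed.

Lemma reset_at_k0 : xn k0 = x0s k0 /\ s k0 = k0.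
Proof.
apply: reset_state => //; rewrite -(prednK k0_gt0) q_next gamma_k0.
by apply: Theta_of_last; rewrite prednK.
Qed.

Lemma q_lt k : (k0 <= k)%N -> (q k < k)%N.
Proof.
move: k; apply: leq_ind => [|j _ lt_qj]; first by rewrite -(prednK k0_gt0) q_next gamma_k0.
by rewrite q_next; case: ifP => // _; apply: ltnW.
Qed.

Lemma s_le k : (k0 <= k)%N -> (s k <= k)%N.
Proof.
move: k; apply: leq_ind => [|j _ le_sj]; first by rewrite reset_at_k0.2.
by rewrite s_next; case: ifP => // _; apply: leqW.
Qed.

Lemma nominal_next j : xn j = plan_state j ->
  A *m xn j + B *m un j
  = plan_traj A B Kb N (x0s (s j)) (us (s j)) (xbs (s j)) (ubs (s j)) (j - s j).+1.
Proof. by move=> xn_plan; rewrite un_actuator xn_plan. Qed.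

Lemma error_next j : Z (x j - xn j) -> Z (x j.+1 - (A *m xn j + B *m un j)).
Proof.
move=> err; rewrite x_next u_ancillary ancillary_step_split addrC -addrA addKr.
exact: Z_invariant.
Qed.

Lemma feasible_next k : tracking k -> feasible_at k.+1.
Proof.
case=> adm_k adm_sk xn_plan err; rewrite /feasible_at /=.
case g_k: (gamma k).
  apply: (feasible_shifted_plan (j := (k - s k).+1) adm_sk).
  rewrite /init_consistent -nominal_next // => _ [_ [b [-> [Wb ->]]]].
  exists (A *m xn k + B *m un k), ((A - B *m K) *m (x k - xn k) + b).
  split=> //; split; first exact: Z_invariant.
  by rewrite xhat_next g_k u_ancillary ancillary_step_split addrA.
apply: (feasible_shifted_plan (j := 1) adm_k).
by rewrite /init_consistent xhat_next g_k /= /plan_input N_gt0.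
Qed.

Lemma error_after_reset k : (k0 <= k)%N -> tracking k -> admissible_at k.+1 ->
  Theta_of theta (q k.+1) k.+1 -> Z (x k.+1 - x0s k.+1).
Proof.
case: k => [|k] le_k0k; first by have := leq_trans k0_gt0 le_k0k.
case=> _ _ _ err [_ [_ [_ init]]]; move: init; rewrite /= q_next.
case g_k: (gamma k.+1) => /=.
  move=> init _.
  have [_ [z [-> [Zz ->]]]] : Defs.msum [set x0s k.+2] Z (x k.+2).
    apply: init; exists (xhat k.+2), (w k.+1).
    by split=> //; split=> //; rewrite x_next xhat_next g_k.
  by rewrite addrC addKr.
move=> x0_xhat reset_k.
(* Without a measurement q does not move, so the previous packet was accepted as well
   and the new plan starts from the nominal successor. *)
have [xn_x0 s_k] := reset_state (ltn0Sn _) (Theta_of_prev (q_lt le_k0k) reset_k).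
have un_us : un k.+1 = us k.+1 0%N by rewrite un_actuator s_k subnn N_gt0.
by rewrite x0_xhat xhat_next g_k -xn_x0 -un_us; apply: error_next.
Qed.

Lemma tracking_next k : (k0 <= k)%N -> tracking k -> tracking k.+1.
Proof.
move=> le_k0k track_k.
have adm_k1 := feasible_admissible_at (ltn0Sn _) (feasible_next track_k).
case: (track_k) => _ adm_sk xn_plan err.
case reset: (Theta_of theta (q k.+1) k.+1).
  have [xn_x0 s_k1] := reset_state (ltn0Sn _) reset.
  split; rewrite ?s_k1 //; first by rewrite /plan_state s_k1 subnn.
  by rewrite xn_x0; apply: error_after_reset.
rewrite /tracking /plan_state xn_next s_next reset subSn ?s_le //.
by split=> //; [apply: nominal_next | apply: error_next].
Qed.

Lemma tracking_from_k0 k : (k0 <= k)%N -> tracking k.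
Proof.
move: k; apply: leq_ind => [|j le_k0j]; last exact: tracking_next.
have [xn_x0 s_k0] := reset_at_k0.
have adm_k0 := feasible_admissible_at k0_gt0 feasible_k0.
by split; rewrite ?s_k0 // /plan_state s_k0 subnn.
Qed.

Lemma closed_loop_invariant k : (k0 <= k)%N ->
  [/\ feasible_at k, Xc (xn k), Uc (un k) & Z (x k - xn k)].
Proof.
move=> /tracking_from_k0[adm_k adm_sk xn_plan err].
have [Xc_plan Uc_plan] := admissible_plan_traj adm_sk (k - s k).
split=> //; first by exists (x0s k), (us k), (xbs k), (ubs k).
  by rewrite xn_plan.
by rewrite un_actuator xn_plan.
Qed.

End ClosedLoop.

Theorem proposition3
  (R : realType) (nx nu pw px pu : nat)
  (A : 'M[R]_nx) (B : 'M[R]_(nx, nu))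
  (Hw : 'M[R]_(pw, nx)) (hw : 'cV[R]_pw)
  (Hx : 'M[R]_(px, nx)) (hx : 'cV[R]_px)
  (Hu : 'M[R]_(pu, nu)) (hu : 'cV[R]_pu)
  (K Kb : 'M[R]_(nu, nx)) (Q P T : 'M[R]_nx) (Rw : 'M[R]_nu)
  (xr : 'cV[R]_nx) (N : nat) (lam : R)
  (d : measure_display) (Omega : measurableType d) (Pr : probability Omega R)
  (gamma theta : Omega -> nat -> bool) :
  let W := polyh Hw hw in
  let X := polyh Hx hx in
  let U := polyh Hu hu in
  let ZK := inf_msum (A - B *m K) W in
  let Xc := pdiff X ZK in
  let Uc := pdiff U (limage (- K) ZK) in
  (* standing assumptions *)
  stabilizable A B ->
  compact_cv W -> zero_interior W ->
  bounded_set X -> zero_interior X ->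
  bounded_set U -> zero_interior U ->
  (0 < N)%N -> 0 < lam < 1 ->
  (* assumptions of the proposition *)
  posdef Q -> posdef Rw -> posdef T ->
  sqrt_observable Q A ->
  schur_stable (A - B *m K) -> schur_stable (A - B *m Kb) ->
  P = (A - B *m Kb)^T *m P *m (A - B *m Kb) + Q + Kb^T *m Rw *m Kb ->
  (forall t, measurable [set om | gamma om t]) ->
  (forall t, measurable [set om | theta om t]) ->
  (* Prob( /\_{t >= k} {gamma_{t-1} theta_t = 0} ) = 0, written with t = t'+1 *)
  (forall k : nat,
     Pr (\bigcap_(t in [set t : nat | (k <= t)%N])
           [set om | (gamma om t && theta om t.+1) = false]) = 0%E) ->
  forall (om : Omega)
    (x : nat -> 'cV[R]_nx) (u : nat -> 'cV[R]_nu) (w : nat -> 'cV[R]_nx)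
    (xn : nat -> 'cV[R]_nx) (un : nat -> 'cV[R]_nu)
    (s q : nat -> nat)
    (xhat : nat -> 'cV[R]_nx)               (* xhat k = \hat x(k|k-1) *)
    (x0s : nat -> 'cV[R]_nx) (us : nat -> nat -> 'cV[R]_nu)
    (xbs : nat -> 'cV[R]_nx) (ubs : nat -> 'cV[R]_nu),
  (* plant *)
  (forall k, W (w k)) ->
  (forall k, x k.+1 = A *m x k + B *m u k + w k) ->
  (* ancillary controller *)
  (forall k, u k = un k - K *m (x k - xn k)) ->
  (* consistent actuator *)
  (forall k, un k = if (k - s k < N)%N then us (s k) (k - s k)%N
                    else ubs (s k) + Kb *m xbs (s k) - Kb *m xn k) ->
  (* nominal state update and nominal model *)
  (forall k, xn k.+1 = if Theta_of (theta om) (q k.+1) k.+1 then x0s k.+1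
                       else A *m xn k + B *m un k) ->
  (forall k, s k.+1 = if Theta_of (theta om) (q k.+1) k.+1 then k.+1 else s k) ->
  (* remote estimator *)
  (forall k, xhat k.+1 = A *m (if gamma om k then x k else x0s k)
                         + B *m (if gamma om k then u k else us k 0%N)) ->
  (forall k, q k.+1 = if gamma om k then k else q k) ->
  (* extended remote MPC: optimal solution used whenever the problem is feasible *)
  (forall k, mpc_feasible A B Kb W ZK Xc Uc N lam (gamma om k) (xhat k.+1) ->
     mpc_optimal A B Kb W ZK Xc Uc Q P T Rw xr N lam (gamma om k) (xhat k.+1)
       (x0s k.+1) (us k.+1) (xbs k.+1) (ubs k.+1)) ->
  forall k0 : nat, (0 < k0)%N ->
  gamma om k0.-1 -> theta om k0 -> ZK (x k0 - xn k0) ->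
  mpc_feasible A B Kb W ZK Xc Uc N lam (gamma om k0.-1) (xhat k0) ->
  forall k : nat, (k0 <= k)%N ->
    mpc_feasible A B Kb W ZK Xc Uc N lam (gamma om k.-1) (xhat k) /\ X (x k) /\ U (u k).
Proof.
move=> W X U ZK Xc Uc _ _ _ _ _ _ _ N_gt0 _ _ _ _ _ _ _ _ _ _ _.
move=> om x u w xn un s q xhat x0s us xbs ubs w_in_W x_next u_ancillary.
move=> un_actuator xn_next s_next xhat_next q_next optimal.
move=> k0 k0_gt0 gamma_k0 theta_k0 error_k0 feasible_k0 k le_k0k.
have [feasible_k Xc_xn Uc_un Z_err] := closed_loop_invariant
  (@inf_msum_mulmxD _ _ _ W) N_gt0 w_in_W x_next u_ancillary un_actuator xn_next
  s_next xhat_next q_next (fun j feasible_j => proj1 (optimal j feasible_j))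
  k0_gt0 gamma_k0 theta_k0 error_k0 feasible_k0 le_k0k.
have [X_x U_u] := tube_constraints Xc_xn Uc_un Z_err.
by rewrite subrKC in X_x; rewrite u_ancillary.
Qed.
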